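(* In the Bloc formation mechanism with $n=2p+1$ agents, any message profile $m$ that admits a bloc also admits an effective bloc $B^*$. Moreover the effective bloc $B^*$ is unique and $B^*=\bigcap_{B\in B^m}B$, where $B^m$ is the set of all blocs in $m$.
   Context: Agents $I=\{1,\dots,n\}$, $n=2p+1$, options $A=\{a,b\}$. In the Bloc formation mechanism each agent $i$ sends $m_i=(v_i,c_i)$, with a vote $v_i\in A$ and a set $c_i$ of exactly $p$ agents other than $i$ (nominations). For $x\in A$, a set $B\subseteq I$ with $|B|\ge p+1$ is a bloc in favor of $x$ in $m$ if $v_i=x$ and $c_i\subseteq B$ for every $i\in B$. The nomination graph $G_m$ is the directed graph on vertex set $I$ with an edge $i\to j$ iff $j\in c_i$. A bloc $B$ is effective if the subgraph of $G_m$ induced by $B$ is strongly connected, i.e., for any $i,j\in B$ there is a directed path from $i$ to $j$ using only vertices of $B$. *)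

From HB Require Import structures.
From mathcomp Require Import all_boot.
Set Implicit Arguments. Unset Strict Implicit. Unset Printing Implicit Defensive.

Inductive alt := alt_a | alt_b.

Definition alt_to_bool (x : alt) : bool := if x is alt_a then true else false.
Definition bool_to_alt (b : bool) : alt := if b then alt_a else alt_b.
Lemma alt_boolK : cancel alt_to_bool bool_to_alt. Proof. by case. Qed.
HB.instance Definition _ := Equality.copy alt (can_type alt_boolK).
HB.instance Definition _ := Finite.copy alt (can_type alt_boolK).

Definition vote n (m : 'I_n -> alt * {set 'I_n}) (i : 'I_n) : alt := (m i).1.
Definition noms n (m : 'I_n -> alt * {set 'I_n}) (i : 'I_n) : {set 'I_n} := (m i).2.

Definition valid_profile n p (m : 'I_n -> alt * {set 'I_n}) : Prop :=
  forall i : 'I_n, #|noms m i| = p /\ i \notin noms m i.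

Definition bloc_for n p (m : 'I_n -> alt * {set 'I_n}) (x : alt) (B : {set 'I_n}) : bool :=
  (p.+1 <= #|B|) && [forall i in B, (vote m i == x) && (noms m i \subset B)].

Definition bloc n p (m : 'I_n -> alt * {set 'I_n}) (B : {set 'I_n}) : bool :=
  [exists x : alt, bloc_for p m x B].

Definition nom_graph n (m : 'I_n -> alt * {set 'I_n}) : rel 'I_n :=
  fun i j => j \in noms m i.

Definition induced n (e : rel 'I_n) (B : {set 'I_n}) : rel 'I_n :=
  fun i j => [&& i \in B, j \in B & e i j].

Definition effective n (m : 'I_n -> alt * {set 'I_n}) (B : {set 'I_n}) : Prop :=
  forall i j, i \in B -> j \in B -> connect (induced (nom_graph m) B) i j.

From mathcomp Require Import all_boot.
From mathcomp Require Import zify.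

Set Implicit Arguments.
Unset Strict Implicit.
Unset Printing Implicit Defensive.

(* Two blocs each contain more than half of the 2p+1 agents, so they share an
   agent i; its vote fixes the option of both, and i together with its p
   nominees lies in both, so blocs are closed under intersection and the
   intersection B* of all blocs is the least bloc.  For i in B*, the agents
   reachable from i in G_m again form a bloc, hence contain B*: this is strong
   connectivity, the paths staying in B* because blocs are closed under
   nominations.  Conversely an effective bloc contains B*, and every one of its
   members is reachable from a member of B*, hence lies in B*. *)

Section ClosedSets.
Variables (n : nat) (e : rel 'I_n) (B : {set 'I_n}).
Hypothesis closedB : forall u v, u \in B -> e u v -> v \in B.

Lemma connect_closed_mem u v : u \in B -> connect e u v -> v \in B.
Proof.
move=> uB /connectP [s]; elim: s u uB => [|z s IH] u uB /=; first by move=> _ ->.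
by case/andP => euz; apply: IH; apply: closedB uB euz.
Qed.

Lemma connect_induced_closed u v :
  u \in B -> connect e u v -> connect (induced e B) u v.
Proof.
move=> uB /connectP [s]; elim: s u uB => [|z s IH] u uB /=; first by move=> _ ->.
case/andP => euz pzs vlast; have zB := closedB uB euz.
apply: (connect_trans _ (IH z zB pzs vlast)).
by apply: connect1; rewrite /induced uB zB euz.
Qed.

End ClosedSets.

Lemma connect_induced_sub n (e : rel 'I_n) (B : {set 'I_n}) :
  subrel (connect (induced e B)) (connect e).
Proof. by apply: connect_sub => u v /and3P [_ _ euv]; apply: connect1. Qed.

Section Blocs.
Variables (n p : nat) (m : 'I_n -> alt * {set 'I_n}).

Lemma bloc_forP x (B : {set 'I_n}) :
  reflect (p < #|B| /\ forall i, i \in B -> vote m i = x /\ noms m i \subset B)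
          (bloc_for p m x B).
Proof.
apply: (iffP andP) => [[cardB /forall_inP hB]|[cardB hB]]; split => //.
  by move=> i /hB /andP [/eqP -> ->].
by apply/forall_inP => i /hB [-> ->]; rewrite eqxx.
Qed.

Lemma bloc_nom_closed (B : {set 'I_n}) :
  bloc p m B -> forall u v, u \in B -> nom_graph m u v -> v \in B.
Proof.
by case/existsP => x /bloc_forP [_ hB] u v /hB [_ /subsetP]; apply.
Qed.

Lemma bloc_nonempty (B : {set 'I_n}) : bloc p m B -> exists i, i \in B.
Proof.
case/existsP => x /bloc_forP [cardB _]; apply/card_gt0P.
exact: leq_ltn_trans (leq0n p) cardB.
Qed.

Hypothesis hv : valid_profile p m.

Lemma card_setU1_noms i : #|i |: noms m i| = p.+1.
Proof. by have [cardc ic] := hv i; rewrite cardsU1 ic cardc. Qed.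

Lemma bloc_for_closed x (A : {set 'I_n}) i :
    i \in A -> (forall j, j \in A -> vote m j = x /\ noms m j \subset A) ->
  bloc_for p m x A.
Proof.
move=> iA hA; apply/bloc_forP; split => //.
rewrite -(card_setU1_noms i); apply: subset_leq_card.
by rewrite subUset sub1set iA; case: (hA i iA).
Qed.

Lemma reach_bloc (B : {set 'I_n}) i :
  bloc p m B -> i \in B -> bloc p m [set j | connect (nom_graph m) i j].
Proof.
move=> blocB iB; have closedB := bloc_nom_closed blocB.
case/existsP: blocB => x /bloc_forP [_ hB]; apply/existsP; exists x.
apply: (bloc_for_closed (i := i)); first by rewrite inE connect0.
move=> j; rewrite inE => ij; split.
  by case: (hB j (connect_closed_mem closedB iB ij)).
apply/subsetP => k jk; rewrite inE (connect_trans ij) //.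
exact: connect1.
Qed.

Hypothesis hn : n = p.*2.+1.

Lemma blocs_meet (B1 B2 : {set 'I_n}) :
  bloc p m B1 -> bloc p m B2 -> exists i, i \in B1 :&: B2.
Proof.
case/existsP => x /bloc_forP [card1 _]; case/existsP => y /bloc_forP [card2 _].
apply/card_gt0P; have := cardsUI B1 B2; have := max_card (B1 :|: B2).
by rewrite card_ord; move: card1 card2 hn; rewrite -addnn; lia.
Qed.

Lemma blocI (B1 B2 : {set 'I_n}) :
  bloc p m B1 -> bloc p m B2 -> bloc p m (B1 :&: B2).
Proof.
move=> bloc1 bloc2; have [i] := blocs_meet bloc1 bloc2.
case/existsP: bloc1 => x /bloc_forP [_ h1]; case/existsP: bloc2 => y /bloc_forP [_ h2].
rewrite inE => /andP [i1 i2].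
have [vix _] := h1 i i1; have [viy _] := h2 i i2.
apply/existsP; exists x; apply: (bloc_for_closed (i := i)); first by rewrite inE i1.
move=> j; rewrite inE => /andP [j1 j2].
have [-> s1] := h1 j j1; have [_ s2] := h2 j j2.
by rewrite subsetI s1 s2.
Qed.

Definition bloc_core : {set 'I_n} := \bigcap_(B : {set 'I_n} | bloc p m B) B.

Lemma bloc_core_sub (B : {set 'I_n}) : bloc p m B -> bloc_core \subset B.
Proof. exact: bigcap_inf. Qed.

Lemma bloc_core_bloc : (exists B, bloc p m B) -> bloc p m bloc_core.
Proof.
case=> B0 bloc0; rewrite /bloc_core (bigD1 B0) //=.
apply: (big_ind (fun X => bloc p m (B0 :&: X))) => [|X Y bX bY|B /andP [bB _]].
- by rewrite setIT.
- by rewrite setIIr; apply: blocI.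
- exact: blocI.
Qed.

Lemma bloc_core_effective : (exists B, bloc p m B) -> effective m bloc_core.
Proof.
move=> /bloc_core_bloc blocC i j iC jC.
apply: (connect_induced_closed (bloc_nom_closed blocC) iC).
have := subsetP (bloc_core_sub (reach_bloc blocC iC)) j jC.
by rewrite inE.
Qed.

Lemma effective_bloc_core (B : {set 'I_n}) :
  bloc p m B -> effective m B -> B = bloc_core.
Proof.
move=> blocB effB; have blocC := bloc_core_bloc (ex_intro _ B blocB).
have [i iC] := bloc_nonempty blocC; have iB := subsetP (bloc_core_sub blocB) i iC.
apply/eqP; rewrite eqEsubset bloc_core_sub // andbT; apply/subsetP => j jB.
apply: (connect_closed_mem (bloc_nom_closed blocC) iC).
exact: connect_induced_sub (effB i j iB jB).
Qed.

End Blocs.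

Theorem lemma1 (n p : nat) (hn : n = p.*2.+1) (m : 'I_n -> alt * {set 'I_n}) :
  valid_profile p m ->
  (exists B : {set 'I_n}, bloc p m B) ->
  exists Bstar : {set 'I_n},
    [/\ bloc p m Bstar, effective m Bstar,
        (forall B : {set 'I_n}, bloc p m B -> effective m B -> B = Bstar) &
        Bstar = \bigcap_(B : {set 'I_n} | bloc p m B) B].
Proof.
move=> hv exB; exists (bloc_core p m); split => //.
- exact: bloc_core_bloc.
- exact: bloc_core_effective.
- exact: effective_bloc_core.
Qed.
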